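(* Let $N$ be a simply connected nilpotent Lie group, $M$ a connected closed normal subgroup of $N$ with Haar measure $vol_M$, and $(D_t)_{t>0}$ a nicely growing family of subsets of $N$. For $g\in N$ let $\mu_t^g$ be the probability measure on $N$ given by $\mu_t^g(dy)=\frac{1_{g^{-1}D_t\cap M}(y)}{vol_M(g^{-1}D_t\cap M)}vol_M(dy)$. Then for every $h\in M$, $$\lim_{t\to+\infty}\|\delta_h*\mu_t^g-\mu_t^g\|=0$$ uniformly for $g$ in compact subsets of $N$, where $\|\cdot\|$ is the total variation norm and $\delta_h$ the Dirac mass at $h$.
   Context: Identify $N$ with its Lie algebra $\mathfrak n$ via $\exp$; let $C^p(\mathfrak n)$ be the descending central series and, for a connected subgroup $H$, $\deg_N(H)=\sum_{j\ge1}\dim(\mathrm{Lie}(H)\cap C^j(\mathfrak n))$. A family $(D_t)_{t>0}$ of measurable subsets of $N$ is nicely growing if: (i) $D_t\subseteq D_s$ for $t\le s$ and $\bigcup D_t=N$; (ii) for every compact $K$ there is $\varepsilon_t>0$, $\varepsilon_t\to0$, with $D_{t(1-\varepsilon_t)}\subseteq KD_tK\subseteq D_{t(1+\varepsilon_t)}$ for large $t$; (iii) for every connected subgroup $H$ of $N$ with Haar measure $vol_H$, $\lim_t vol_H(D_t\cap H)/t^{\deg_N(H)}=C(H)>0$; (iv) there is $\alpha>1$ with $D_tD_t^{-1}\subseteq D_{\alpha t}$ for $t>1$. *)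

From HB Require Import structures.
From mathcomp Require Import all_boot all_order all_algebra.
From mathcomp Require Import all_classical all_reals all_analysis.
Set Implicit Arguments. Unset Strict Implicit. Unset Printing Implicit Defensive.
Import Order.TTheory GRing.Theory Num.Theory.
Import numFieldNormedType.Exports.
Local Open Scope classical_set_scope.
Local Open Scope ring_scope.

(* Model: every simply connected nilpotent Lie group is isomorphic to
   exp(n) for n a Lie subalgebra of strictly upper triangular real k x k
   matrices (Ado/Birkhoff + Engel), with matrix product as group law. *)

Section Defs.
Variables (R : realType) (k : nat).

Definition Mx := g_sigma_algebraType (open : set (set 'M[R]_k)).

Definition strictly_upper (X : 'M[R]_k) : Prop :=
  forall i j : 'I_k, (j <= i)%N -> X i j = 0.

Definition bracket (X Y : 'M[R]_k) : 'M[R]_k := X *m Y - Y *m X.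

Definition lie_subalg (V : {vspace 'M[R]_k}) : Prop :=
  forall X Y, X \in V -> Y \in V -> bracket X Y \in V.

Definition nil_lie_alg (n : {vspace 'M[R]_k}) : Prop :=
  lie_subalg n /\ forall X, X \in n -> strictly_upper X.

Definition lie_ideal (n m : {vspace 'M[R]_k}) : Prop :=
  (m <= n)%VS /\ forall X Y, X \in n -> Y \in m -> bracket X Y \in m.

Definition mxpow (X : 'M[R]_k) (i : nat) : 'M[R]_k := iter i (mulmx X) 1%:M.

(* matrix exponential; exact for strictly upper triangular X (X^k = 0) *)
Definition mexp (X : 'M[R]_k) : 'M[R]_k :=
  \sum_(i < k) (i`!%:R)^-1 *: mxpow X i.

Definition grp (V : {vspace 'M[R]_k}) : set Mx :=
  [set mexp X | X in [set X | X \in V]].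

Definition brk (V W : {vspace 'M[R]_k}) : {vspace 'M[R]_k} :=
  (<<[seq bracket X Y | X <- vbasis V, Y <- vbasis W]>>)%VS.

(* lcs n i = C^{i+1}(n), descending central series: C^1 = n, C^{j+1}=[n,C^j] *)
Fixpoint lcs (n : {vspace 'M[R]_k}) (i : nat) : {vspace 'M[R]_k} :=
  if i is i'.+1 then brk n (lcs n i') else n.

(* deg_N(H) = sum_{j>=1} dim(Lie(H) ∩ C^j(n)); the terms with j > k vanish
   since C^j(n) = 0 for j >= k (strictly upper triangular matrices). *)
Definition degN (n h : {vspace 'M[R]_k}) : nat :=
  (\sum_(i < k) \dim (h :&: lcs n i))%N.

(* nu is a Haar measure of the closed subgroup G, viewed as a Borel measure
   on the ambient space concentrated on G: left invariant under G, finite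
   on compacts, positive on nonempty relatively open subsets of G. *)
Definition haar (G : set Mx) (nu : {measure set Mx -> \bar R}) : Prop :=
  [/\ nu (~` G) = 0%E,
      (forall g (A : set Mx), G g -> measurable A ->
          nu [set g *m x | x in A] = nu A),
      (forall K : set 'M[R]_k, compact K -> (nu K < +oo)%E) &
      (forall U : set 'M[R]_k, open U -> U `&` G !=set0 ->
          (0 < nu (U `&` G))%E)].

Definition KDK (K D : set Mx) : set Mx :=
  [set z | exists a x b, [/\ K a, D x, K b & z = a *m x *m b]].

Definition ng_i (n : {vspace 'M[R]_k}) (D : R -> set Mx) : Prop :=
  [/\ (forall t, 0 < t -> measurable (D t) /\ D t `<=` grp n),
      (forall t s, 0 < t -> t <= s -> D t `<=` D s) &
      \bigcup_(t in [set t : R | 0 < t]) D t = grp n].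

Definition ng_ii (n : {vspace 'M[R]_k}) (D : R -> set Mx) : Prop :=
  forall K : set 'M[R]_k, compact K -> K !=set0 -> K `<=` grp n ->
    exists eps : R -> R, [/\ (forall t, 0 < eps t),
      (eps @ +oo --> 0) &
      (\forall t \near +oo,
         D (t * (1 - eps t)) `<=` KDK K (D t) /\
         KDK K (D t) `<=` D (t * (1 + eps t)))].

(* (iii) connected subgroups H of N are exactly exp(h) for Lie subalgebras
   h of n, with Lie(H) = h *)
Definition ng_iii (n : {vspace 'M[R]_k}) (D : R -> set Mx) : Prop :=
  forall h : {vspace 'M[R]_k}, lie_subalg h -> (h <= n)%VS ->
    forall nu, haar (grp h) nu ->
    exists C : R, 0 < C /\
      ((fun t : R => (nu (D t `&` grp h) * ((t ^+ degN n h)^-1)%:E)%E)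
         @ +oo --> C%:E).

Definition ng_iv (D : R -> set Mx) : Prop :=
  exists alpha : R, 1 < alpha /\ forall t, 1 < t ->
    [set x *m invmx y | x in D t & y in D t] `<=` D (alpha * t).

Definition nicely_growing (n : {vspace 'M[R]_k}) (D : R -> set Mx) : Prop :=
  [/\ ng_i n D, ng_ii n D, ng_iii n D & ng_iv D].

Definition normalized (vol : {measure set Mx -> \bar R}) (S : set Mx)
  (A : set Mx) : \bar R :=
  (vol (A `&` S) * ((fine (vol S))^-1)%:E)%E.

Definition dirac_conv (h : Mx) (mu : set Mx -> \bar R) (A : set Mx) : \bar R :=
  mu [set y | A (h *m y)].

Definition tv_dist (mu1 mu2 : set Mx -> \bar R) : \bar R :=
  ereal_sup [set x | exists (p : nat) (F : nat -> set Mx),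
     [/\ (forall i, measurable (F i)),
        trivIset [set i | (i < p)%N] F,
        \bigcup_(i in [set i | (i < p)%N]) F i = setT &
        x = (\sum_(i < p) `|mu1 (F i) - mu2 (F i)|)%E]].

End Defs.

From HB Require Import structures.
From mathcomp Require Import all_boot all_order all_algebra.
From mathcomp Require Import all_classical all_reals all_analysis.
From mathcomp Require Import perm ring lra.
Set Implicit Arguments. Unset Strict Implicit. Unset Printing Implicit Defensive.
Import Order.TTheory GRing.Theory Num.Theory.
Import numFieldNormedType.Exports.
Local Open Scope classical_set_scope.
Local Open Scope ring_scope.

(* Fix r > 1 close to 1.  For g in K and t large, property (ii) of nicely
   growing families (applied to a compact set containing K, its inverses and
   h K^-1) sandwiches S_t = g^-1 D_t ∩ M between D_(t/r) ∩ M and D_(tr) ∩ M,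
   and puts h S_t inside D_(tr).  Left invariance of vol_M gives
   vol(h S_t) = vol(S_t), hence
     ||δ_h * μ - μ|| <= 2 vol(h S_t \ S_t) / vol(S_t)
                     <= 2 (vol(D_(tr) ∩ M) - vol(S_t)) / vol(S_t),
   and by (iii) vol(D_(tr) ∩ M) / vol(D_(t/r) ∩ M) is eventually at most
   r^(2 deg_N(M) + 2), which is as close to 1 as we like. *)

Section Unipotent.
Variables (R : realType) (k : nat).
Implicit Types X Y : 'M[R]_k.

Lemma strictly_upper_mul X Y : strictly_upper X -> strictly_upper Y ->
  strictly_upper (X *m Y).
Proof.
move=> uX uY i j ji; rewrite mxE big1 // => l _.
have [il|li] := ltnP i l; last by rewrite uX ?mul0r.
by rewrite uY ?mulr0 // (leq_trans ji (ltnW il)).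
Qed.

Lemma strictly_upper_mxpow X i : strictly_upper X -> strictly_upper (mxpow X i.+1).
Proof.
move=> uX; elim: i => [|i IHi]; first by rewrite /mxpow /= mulmx1.
by rewrite /mxpow iterS; apply: strictly_upper_mul.
Qed.

Lemma mexp_lower X (i j : 'I_k) : strictly_upper X -> (j <= i)%N ->
  mexp X i j = (i == j)%:R.
Proof.
move=> uX ji; have k_gt0 : (0 < k)%N by apply: leq_ltn_trans (ltn_ord i).
rewrite /mexp summxE (bigD1 (Ordinal k_gt0)) //= big1 ?addr0.
  by rewrite mxE /mxpow /= mxE invr1 mul1r.
by move=> [[|l] lk] //= _; rewrite mxE strictly_upper_mxpow // mulr0.
Qed.

Lemma det_mexp X : strictly_upper X -> \det (mexp X) = 1.
Proof.
move=> uX; rewrite -det_tr det_trig.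
  by rewrite big1 // => i _; rewrite mxE mexp_lower // eqxx.
apply/is_trig_mxP => i j ij; rewrite mxE mexp_lower ?(ltnW ij) //.
by case: eqP ij => // ->; rewrite ltnn.
Qed.

Lemma mexp_unit X : strictly_upper X -> mexp X \in unitmx.
Proof. by move=> uX; rewrite unitmxE det_mexp ?unitr1. Qed.

Lemma invmx_mexp X : strictly_upper X -> invmx (mexp X) = \adj (mexp X).
Proof. by move=> uX; rewrite /invmx mexp_unit // det_mexp // invr1 scale1r. Qed.

Lemma mexp0 : mexp (0 : 'M[R]_k) = 1%:M.
Proof.
rewrite /mexp; have [k0|k_gt0] := posnP k.
  by apply/matrixP => i; move: (ltn_ord i); rewrite {2}k0.
rewrite (bigD1 (Ordinal k_gt0)) //= big1 ?addr0; first by rewrite invr1 scale1r.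
by move=> [[|l] lk] //= _; rewrite /mxpow /= mul0mx scaler0.
Qed.

End Unipotent.

Section MatrixContinuity.
Variables (R : realType) (T : topologicalType).

Lemma continuous_mx m n (f : T -> 'M[R]_(m, n)) :
  (forall i j, continuous (fun x => f x i j)) -> continuous f.
Proof.
move=> cf x; apply/cvg_mx_entourageP => A entA.
apply: filter_forall => i; apply: filter_forall => j.
have /cvg_entourageP/(_ A entA) := cf i j x.
by move=> fxA; near=> y; rewrite inE; near: y.
Unshelve. all: by end_near.
Qed.

Lemma continuous_mxE m n (f : T -> 'M[R]_(m, n)) :
  continuous f -> forall i j, continuous (fun x => f x i j).
Proof.
by move=> cf i j x; exact: (continuous_comp (cf x) (@coord_continuous _ _ _ i j (f x))).
Qed.
Arguments continuous_mxE {m n f} cf i j.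

Lemma continuous_sumr (I : Type) (r : seq I) (P : pred I) (F : I -> T -> R) :
  (forall i, P i -> continuous (F i)) -> continuous (fun x => \sum_(i <- r | P i) F i x).
Proof. exact/continuous_big/add_continuous. Qed.

Lemma continuous_prodr (I : Type) (r : seq I) (P : pred I) (F : I -> T -> R) :
  (forall i, P i -> continuous (F i)) -> continuous (fun x => \prod_(i <- r | P i) F i x).
Proof. exact/continuous_big/mul_continuous. Qed.

Lemma continuous_mulmx m n p (f : T -> 'M[R]_(m, n)) (g : T -> 'M[R]_(n, p)) :
  continuous f -> continuous g -> continuous (fun x => f x *m g x).
Proof.
move=> cf cg; apply: continuous_mx => i j.
under eq_fun do rewrite mxE.
apply: continuous_sumr => l _ x.
exact: (continuousM (continuous_mxE cf i l x) (continuous_mxE cg l j x)).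
Qed.

Lemma continuous_det n (f : T -> 'M[R]_n) : continuous f -> continuous (fun x => \det (f x)).
Proof.
move=> cf; apply: continuous_sumr => s _ x.
have cprod : continuous (fun y => \prod_i f y i (s i)).
  by apply: continuous_prodr => i _; apply: continuous_mxE.
exact: (continuousM (@cst_continuous T R _ x) (cprod x)).
Qed.

Lemma continuous_adj n (f : T -> 'M[R]_n) : continuous f -> continuous (fun x => \adj (f x)).
Proof.
move=> cf; apply: continuous_mx => i j.
under eq_fun do rewrite mxE.
have cminor : continuous (fun x => \det (row' j (col' i (f x)))).
  apply: continuous_det; apply: continuous_mx => a b.
  under eq_fun do rewrite !mxE.
  exact: continuous_mxE.
by move=> x; exact: (continuousM (@cst_continuous T R _ x) (cminor x)).
Qed.

End MatrixContinuity.

Lemma continuous_mxpow (R : realType) k i : continuous (fun X : 'M[R]_k => mxpow X i).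
Proof.
elim: i => [|i IHi]; first by move=> X; apply: cst_continuous.
exact: (continuous_mulmx (fun _ => cvg_id) IHi).
Qed.

Lemma continuous_mexp (R : realType) k : continuous (@mexp R k).
Proof.
apply: continuous_big; first exact: add_continuous.
move=> i _ X; exact: (continuousZ (@cst_continuous _ R _ X) (@continuous_mxpow R k i X)).
Qed.

Section Measurability.
Variables (R : realType) (k : nat).
Local Notation M := 'M[R]_k.

Lemma measurable_open (A : set (Mx R k)) : open (A : set M) -> measurable A.
Proof. exact: sub_sigma_algebra. Qed.

Lemma measurable_closed (A : set (Mx R k)) : closed (A : set M) -> measurable A.
Proof.
by move=> cA; rewrite -[A]setCK; apply: measurableC; apply: measurable_open; apply: closed_openC.
Qed.

Lemma measurable_fun_continuous (f : M -> M) :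
  continuous f -> measurable_fun setT (f : Mx R k -> Mx R k).
Proof.
move=> cf; apply: (measurability (f := f : Mx R k -> Mx R k) open) => // _ [B oB <-].
apply: measurableI => //; apply: measurable_open.
by apply: open_comp => // x _; apply: cf.
Qed.

Lemma measurable_preimage_continuous (f : M -> M) (A : set (Mx R k)) :
  continuous f -> measurable A -> measurable ((f : Mx R k -> Mx R k) @^-1` A).
Proof. by move=> /measurable_fun_continuous mf mA; rewrite -[_ @^-1` _]setTI; apply: mf. Qed.

Lemma measurable_lmul_preimage (g : M) (A : set (Mx R k)) : measurable A ->
  measurable [set y : Mx R k | A (g *m y)].
Proof.
apply: (measurable_preimage_continuous (f := fun y => g *m y)).
exact: (continuous_mulmx (fun _ => cvg_cst _) (fun _ => cvg_id)).
Qed.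

Lemma sigma_compact_grp (V : {vspace M}) :
  exists F : nat -> set M, (forall j, compact (F j)) /\ grp V = \bigcup_j F j.
Proof.
pose b := vbasis V; pose comb (c : 'rV[R]_(\dim V)) := \sum_i c ord0 i *: b`_i.
have ccomb : continuous comb.
  apply: continuous_big; first exact: add_continuous.
  move=> i _ c; exact: (continuousZr_tmp (@coord_continuous _ _ _ ord0 i c)).
pose cube (j : nat) := [set c : 'rV[R]_(\dim V) | forall i, `[- j%:R, j%:R]%classic (c ord0 i)].
exists (fun j => (@mexp R k \o comb) @` cube j); split => [j|].
  apply: continuous_compact.
    apply: continuous_subspaceT => c.
    exact: (continuous_comp (ccomb c) (@continuous_mexp R k _)).
  exact: (@rV_compact R _ _ (fun _ => @segment_compact R (- j%:R) j%:R)).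
apply/seteqP; split => [_ [X XV <-]|_ [j _ [c _ <-]]].
  pose c := \row_(i < \dim V) coord b i X.
  exists (\sum_(i < \dim V) Num.truncn `|c ord0 i|).+1 => //; exists c.
    move=> i /=; rewrite in_itv /= -ler_norml (le_trans (ltW (truncnS_gt _))) //.
    by rewrite ler_nat ltnS (bigD1 i) //= leq_addr.
  by rewrite /= /comb (coord_vbasis XV); congr mexp; apply: eq_bigr => i _; rewrite mxE.
exists (comb c) => //; apply: memv_suml => i _; apply/memvZ/vbasis_mem.
by rewrite mem_nth // size_tuple.
Qed.

Lemma measurable_grp (V : {vspace M}) : measurable (grp V : set (Mx R k)).
Proof.
have [F [cF ->]] := sigma_compact_grp V.
apply: bigcupT_measurable => j; apply: measurable_closed.
by apply: compact_closed; [exact: norm_hausdorff | exact: cF].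
Qed.

End Measurability.

Section TotalVariation.
Variables (R : realType) (k : nat) (mu : {measure set (Mx R k) -> \bar R}).
Local Notation X := (Mx R k).
Local Open Scope ereal_scope.

Lemma measure_fin_num_subset (A B : set X) : measurable A -> measurable B ->
  A `<=` B -> mu B < +oo -> mu A \is a fin_num.
Proof.
move=> mA mB AB Bfin; rewrite ge0_fin_numE //.
by apply: le_lt_trans Bfin; apply: le_measure; rewrite ?inE.
Qed.

Lemma measure_partition p (F : nat -> set X) (A : set X) :
  (forall i, measurable (F i)) -> trivIset `I_p F ->
  \bigcup_(i in `I_p) F i = setT -> measurable A ->
  \sum_(i < p) mu (F i `&` A) = mu A.
Proof.
move=> mF tF FT mA.
have FA : \big[setU/set0]_(i < p) (F i `&` A) = A.
  by rewrite -(bigcup_mkord p (fun i => F i `&` A)) -setI_bigcupl FT setTI.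
rewrite -[in RHS]FA (@measure_semi_additive_ord_I _ _ _ mu (fun i => F i `&` A)) //.
- by move=> i _; apply: measurableI.
- exact: trivIset_setIr.
- by rewrite FA.
Qed.

Lemma measureD_sym (S T : set X) : measurable S -> measurable T ->
  mu T = mu S -> mu S < +oo -> mu (T `\` S) = mu (S `\` T).
Proof.
move=> mS mT TS Sfin.
have fin_TS : mu (T `&` S) \is a fin_num.
  by apply: (measure_fin_num_subset _ mS _ Sfin); [exact: measurableI | move=> x []].
have eS := measureDI mu mS mT; have eT := measureDI mu mT mS.
have : mu (T `\` S) + mu (T `&` S) = mu (S `\` T) + mu (T `&` S).
  by rewrite -eT; apply: etrans TS _; rewrite eS setIC.
by move/(congr1 (fun x => x - mu (T `&` S))); rewrite !addeK.
Qed.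

Lemma measureD_le_sub (S S' T : set X) : measurable S -> measurable S' -> measurable T ->
  S `<=` S' -> mu (T `\` S') = 0 -> mu S' < +oo -> mu (T `\` S) <= mu S' - mu S.
Proof.
move=> mS mS' mT SS' TS'0 S'fin.
have mTS' : measurable (T `\` S') by apply: measurableD.
have mS'S : measurable (S' `\` S) by apply: measurableD.
have -> : mu S = mu (S' `&` S) by rewrite setIidr.
rewrite -measureD //; apply: (@le_trans _ _ (mu ((S' `\` S) `|` (T `\` S')))).
  apply: le_measure; rewrite ?inE; [exact: measurableD | exact: measurableU |].
  by move=> x [Tx nSx]; have [S'x|nS'x] := pselect (S' x); [left | right].
by rewrite le_eqVlt; apply/orP; left; apply/eqP; exact: measureU0.
Qed.

Lemma normalized_sub_le (S T B : set X) : measurable S -> measurable T -> measurable B ->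
  mu T = mu S -> mu S < +oo ->
  `|normalized mu T B - normalized mu S B| <=
    (mu (B `&` (T `\` S)) + mu (B `&` (S `\` T))) * ((fine (mu S))^-1)%:E.
Proof.
move=> mS mT mB TS Sfin; have Tfin : mu T < +oo by rewrite TS.
have split_meas (U V : set X) : measurable U -> measurable V ->
    mu (B `&` U) = mu (B `&` (U `\` V)) + mu (B `&` (U `&` V)).
  move=> mU mV; rewrite setIDA setIA.
  by apply: measureDI => //; apply: measurableI.
have finB (U V : set X) : measurable U -> measurable V -> mu U < +oo ->
    mu (B `&` (U `&` V)) \is a fin_num /\ mu (B `&` (U `\` V)) \is a fin_num.
  move=> mU mV Ufin; split; apply: (measure_fin_num_subset _ mU _ Ufin).
  - by apply: measurableI => //; apply: measurableI.
  - by move=> x [_ []].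
  - by apply: measurableI => //; apply: measurableD.
  - by move=> x [_ []].
have [finTS finTdS] := finB _ _ mT mS Tfin.
have [finST finSdT] := finB _ _ mS mT Sfin.
rewrite /normalized TS (split_meas T S) // (split_meas S T) // (setIC S T).
rewrite -(fineK finTS) -(fineK finTdS) -(fineK finSdT) -!EFinD -!EFinM.
rewrite abse_EFin lee_fin -mulrBl normrM [`|_^-1|%R]ger0_norm ?invr_ge0 ?fine_ge0 //.
apply: ler_wpM2r; first by rewrite invr_ge0 fine_ge0.
rewrite opprD addrACA subrr addr0.
by rewrite (le_trans (ler_normB _ _)) // !ger0_norm ?fine_ge0.
Qed.

Lemma tv_dist_normalized_le (S T : set X) : measurable S -> measurable T ->
  mu T = mu S -> mu S < +oo ->
  tv_dist (normalized mu T) (normalized mu S) <=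
    (mu (T `\` S) + mu (S `\` T)) * ((fine (mu S))^-1)%:E.
Proof.
move=> mS mT TS Sfin; apply: ge_ereal_sup => _ [p [F [mF tF FT ->]]].
set c := ((fine (mu S))^-1)%:E.
apply: (@le_trans _ _ (\sum_(i < p) (mu (F i `&` (T `\` S)) + mu (F i `&` (S `\` T))) * c)).
  by apply: lee_sum => i _; exact: normalized_sub_le.
rewrite -ge0_sume_distrl; last by move=> i _; apply: adde_ge0.
rewrite big_split /= !measure_partition //; by apply: measurableD.
Qed.

Lemma eq_tv_dist (mu1 mu1' mu2 : set X -> \bar R) :
  (forall A, measurable A -> mu1 A = mu1' A) -> tv_dist mu1 mu2 = tv_dist mu1' mu2.
Proof.
move=> eq_mu1; rewrite /tv_dist; congr ereal_sup; apply/seteqP.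
split=> _ [p [F [mF tF FT ->]]]; exists p, F; split => //;
  by apply: eq_bigr => i _; rewrite eq_mu1.
Qed.

Lemma measure_setD_setI_null (A B G : set X) : measurable A -> measurable B ->
  measurable G -> mu (~` G) = 0 -> A `<=` B -> mu (A `\` (B `&` G)) = 0.
Proof.
move=> mA mB mG G_null AB.
apply: (subset_measure0 _ (measurableC mG)) => //; first by apply/measurableD/measurableI.
by move=> x [/AB Bx nBGx] Gx; apply: nBGx.
Qed.

End TotalVariation.

Section LeftTranslation.
Variables (R : realType) (k : nat) (mu : {measure set (Mx R k) -> \bar R}).
Local Notation X := (Mx R k).
Variable h : 'M[R]_k.
Hypothesis h_unit : h \in unitmx.
Hypothesis mu_lmul : forall A : set X, measurable A -> mu [set h *m x | x in A] = mu A.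

Lemma lmul_image_preimage (A : set X) :
  [set h *m x | x in A] = [set y : X | A (invmx h *m y)].
Proof.
apply/seteqP; split => [_ [x Ax <-]|y Ay]; first by rewrite /= mulKmx.
by exists (invmx h *m y) => //; rewrite mulKVmx.
Qed.

Lemma measurable_lmul_image (A : set X) : measurable A ->
  measurable ([set h *m x | x in A] : set X).
Proof. by rewrite lmul_image_preimage; apply: measurable_lmul_preimage. Qed.

Lemma dirac_conv_normalized (S A : set X) : measurable S -> measurable A ->
  dirac_conv h (normalized mu S) A = normalized mu [set h *m x | x in S] A.
Proof.
move=> mS mA; rewrite /dirac_conv /normalized mu_lmul //.
rewrite -mu_lmul; last by apply: measurableI => //; apply: measurable_lmul_preimage.
congr (mu _ * _)%E; apply/seteqP; split => [_ [x [Ahx Sx] <-]|y [Ay [x Sx hxy]]].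
  by split => //; exists x.
by exists x => //; rewrite /= hxy.
Qed.

Lemma tv_dist_lmul_le (S S' : set X) : measurable S -> measurable S' ->
  S `<=` S' -> (mu S' < +oo)%E -> mu ([set h *m x | x in S] `\` S') = 0%E ->
  (tv_dist (dirac_conv h (normalized mu S)) (normalized mu S) <=
     (2 * (fine (mu S') - fine (mu S)) / fine (mu S))%:E)%E.
Proof.
move=> mS mS' SS' S'fin hS_null; set hS : set X := [set h *m x | x in S].
have mhS : measurable hS by apply: measurable_lmul_image.
have hS_S : mu hS = mu S by apply: mu_lmul.
have Sfin : (mu S < +oo)%E by apply: le_lt_trans S'fin; apply: le_measure; rewrite ?inE.
rewrite (eq_tv_dist _ (fun A mA => dirac_conv_normalized mS mA)).
apply: le_trans (tv_dist_normalized_le mS mhS hS_S Sfin) _.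
rewrite -(measureD_sym mS mhS hS_S Sfin).
have fin_S' := measure_fin_num_subset mS' mS' (@subset_refl _ _) S'fin.
have fin_S := measure_fin_num_subset mS mS' SS' S'fin.
have fin_a : mu (hS `\` S) \is a fin_num.
  by apply: (measure_fin_num_subset _ mhS); [exact: measurableD | move=> x [] | rewrite hS_S].
have le_a : fine (mu (hS `\` S)) <= fine (mu S') - fine (mu S).
  by rewrite -lee_fin EFinB !fineK //; exact: measureD_le_sub.
rewrite -(fineK fin_a) -EFinD -EFinM lee_fin.
by apply: ler_wpM2r; [rewrite invr_ge0 fine_ge0 | lra].
Qed.

Lemma tv_dist_lmul_lt (S S' : set X) (L q e : R) : measurable S -> measurable S' ->
  S `<=` S' -> mu ([set h *m x | x in S] `\` S') = 0%E ->
  0 < L -> (L%:E <= mu S)%E -> (mu S' <= (L * q)%:E)%E -> q < 1 + e / 2 ->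
  [/\ (0 < mu S)%E, (mu S < +oo)%E &
    (tv_dist (dirac_conv h (normalized mu S)) (normalized mu S) < e%:E)%E].
Proof.
move=> mS mS' SS' hS_null L_gt0 LS S'Lq q_lt.
have S'fin : (mu S' < +oo)%E by apply: le_lt_trans S'Lq (ltry _).
have Sfin : (mu S < +oo)%E by apply: le_lt_trans S'fin; apply: le_measure; rewrite ?inE.
have S_gt0 : (0 < mu S)%E by apply: lt_le_trans LS; rewrite lte_fin.
split => //; apply: le_lt_trans (tv_dist_lmul_le mS mS' SS' S'fin hS_null) _.
have fin_S : mu S \is a fin_num by rewrite ge0_fin_numE.
have fin_S' : mu S' \is a fin_num by rewrite ge0_fin_numE.
move: LS S'Lq; rewrite -(fineK fin_S) -(fineK fin_S') !lee_fin => LS S'Lq.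
rewrite lte_fin ltr_pdivrMr; last exact: lt_le_trans L_gt0 LS.
have q_ge0 : 0 <= q.
  by rewrite -(pmulr_rge0 _ L_gt0); apply: le_trans S'Lq; rewrite fine_ge0.
nra.
Qed.

End LeftTranslation.

Lemma lie_ideal_subalg (R : realType) k (n m : {vspace 'M[R]_k}) :
  lie_ideal n m -> lie_subalg m.
Proof. by move=> [mn m_ideal] X Y Xm Ym; apply: m_ideal => //; apply: (subvP mn). Qed.

Lemma grpS (R : realType) k (V W : {vspace 'M[R]_k}) : (V <= W)%VS -> grp V `<=` grp W.
Proof. by move=> VW _ [X XV <-]; exists X => //; apply: (subvP VW). Qed.

Lemma near_pinfty_mulr (R : realType) (P : R -> Prop) (c : R) : 0 < c ->
  (\forall t \near +oo, P t) -> \forall t \near +oo, P (t * c).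
Proof.
move=> c_gt0 [M [_ PM]]; exists (M / c); split; first exact: num_real.
by move=> t; rewrite ltr_pdivrMr // => /PM.
Qed.

Lemma cvg_growth_bounds (R : realType) (V : R -> \bar R) (d : nat) (C r : R) :
  0 < C -> 1 < r -> (fun t => V t * ((t ^+ d)^-1)%:E)%E @ +oo --> C%:E ->
  \forall t \near +oo, ((C / r * t ^+ d)%:E <= V t)%E /\ (V t <= (C * r * t ^+ d)%:E)%E.
Proof.
move=> C_gt0 r_gt1 V_cvg; have [V_fin V_fine] := (fine_cvgP _ _).1 V_cvg.
have lt_Cr : \forall t \near +oo, fine (V t * ((t ^+ d)^-1)%:E)%E < C * r.
  by apply: (cvgr_lt _ V_fine); rewrite ltr_pMr.
have gt_Cr : \forall t \near +oo, C / r < fine (V t * ((t ^+ d)^-1)%:E)%E.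
  by apply: (cvgr_gt _ V_fine); rewrite ltr_pdivrMr ?ltr_pMr //; lra.
near=> t; have t_gt0 : 0 < t by near: t; exact: nbhs_pinfty_gt.
have -> : V t = (fine (V t * ((t ^+ d)^-1)%:E) * t ^+ d)%:E.
  rewrite EFinM fineK; last by near: t.
  by rewrite -muleA -EFinM mulVf ?mule1 // expf_neq0 // gt_eqF.
rewrite !lee_fin; split; apply: ler_wpM2r; rewrite ?exprn_ge0 ?ltW //.
  by near: t.
by near: t.
Unshelve. all: by end_near.
Qed.

Lemma growth_ratio (R : realType) (C r t : R) (d : nat) : r != 0 ->
  C * r * (t * r) ^+ d = C / r * (t / r) ^+ d * r ^+ (d + d).+2.
Proof. by move=> r_neq0; rewrite !exprMn exprVn !exprS exprD; field; rewrite expf_neq0. Qed.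

Lemma exists_gt1_exprn_lt (R : realType) (N : nat) (e : R) : 0 < e ->
  exists2 r : R, 1 < r & r ^+ N < 1 + e.
Proof.
move=> e_gt0; have : \forall x \near (1 : R), x ^+ N < 1 + e.
  by apply: (cvgr_lt _ (@exprn_continuous R N 1)); rewrite expr1n ltrDl.
case/nbhs_ballP => a a_gt0 near1; exists (1 + a / 2); first by rewrite ltrDl divr_gt0.
apply: near1; rewrite /ball /= opprD addrA subrr sub0r normrN ger0_norm; last first.
  by rewrite divr_ge0 // ltW.
by rewrite ltr_pdivrMr // ltr_pMr // ltr1n.
Qed.

Section NicelyGrowing.
Variables (R : realType) (k : nat) (n : {vspace 'M[R]_k}) (D : R -> set (Mx R k)).
Hypothesis n_upper : forall X, X \in n -> strictly_upper X.
Hypotheses (ngi : ng_i n D) (ngii : ng_ii n D) (ngiv : ng_iv D).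

Lemma grp1 : grp n 1%:M.
Proof. by exists 0; [exact: mem0v | exact: mexp0]. Qed.

Lemma grp_unit x : grp n x -> x \in unitmx.
Proof. by move=> [X Xn <-]; apply/mexp_unit/n_upper. Qed.

Lemma grp_invmx x : grp n x -> invmx x = \adj x.
Proof. by move=> [X Xn <-]; apply/invmx_mexp/n_upper. Qed.

Lemma grp_mul_invmx x y : grp n x -> grp n y -> grp n (x *m invmx y).
Proof.
have [Dt_sub D_incr D_cover] := ngi; have [a [a_gt1 DDinv]] := ngiv.
have in_D z : grp n z -> exists2 t, 0 < t & D t z.
  by rewrite -D_cover => -[t t_gt0 Dtz]; exists t.
move=> /in_D[s s_gt0 Dx] /in_D[t t_gt0 Dy]; set u := s + t + 1.
have u_gt1 : 1 < u by rewrite /u; lra.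
have Dxy : D (a * u) (x *m invmx y).
  apply: DDinv => //; exists x; first by apply: D_incr Dx; rewrite // /u; lra.
  by exists y => //; apply: D_incr Dy; rewrite // /u; lra.
by apply: (Dt_sub _ _).2 Dxy; apply: mulr_gt0; lra.
Qed.

Lemma grp_adj x : grp n x -> grp n (\adj x).
Proof. by move=> nx; rewrite -grp_invmx // -[invmx x]mul1mx; apply: grp_mul_invmx grp1 nx. Qed.

Lemma KDK_sub_dilate (K : set 'M[R]_k) (r : R) : compact K -> K !=set0 ->
  K `<=` grp n -> 1 < r -> \forall t \near +oo, KDK K (D t) `<=` D (t * r).
Proof.
move=> cK K0 Kn r_gt1; have [_ D_incr _] := ngi.
have [eps [eps_gt0 eps_cvg0 KDK_sub]] := ngii cK K0 Kn.
have eps_small : \forall t \near +oo, eps t < r - 1 by apply: (cvgr_lt _ eps_cvg0); lra.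
near=> t.
have KDK_t : KDK K (D t) `<=` D (t * (1 + eps t)) by near: t; apply: filterS KDK_sub => t [].
have eps_t : eps t < r - 1 by near: t.
have t_gt0 : 0 < t by near: t; exact: nbhs_pinfty_gt.
move=> y /KDK_t; apply: D_incr; first by apply: mulr_gt0 => //; have := eps_gt0 t; lra.
by apply: ler_wpM2l; lra.
Unshelve. all: by end_near.
Qed.

Lemma lmul_sandwich (h : 'M[R]_k) (K : set 'M[R]_k) (r : R) :
  grp n h -> compact K -> K `<=` grp n -> 1 < r ->
  \forall t \near +oo, forall g, K g ->
    [/\ D (t / r) `<=` [set y | D t (g *m y)],
        [set y | D t (g *m y)] `<=` D (t * r) &
        [set y | D t (g *m y)] `<=` [set y | D (t * r) (h *m y)]].
Proof.
move=> nh cK Kn r_gt1; have r_gt0 : 0 < r by lra.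
(* Inverses are taken as adjugates, which agree with invmx on grp n but are
   continuous, so that K1 is compact. *)
pose K1 := [set 1%:M] `|` K `|` ((fun g => \adj g) @` K) `|` ((fun g => h *m \adj g) @` K).
have K1_1 : K1 1%:M by left; left; left.
have cK1 : compact K1.
  have cadj : continuous (fun g : 'M[R]_k => \adj g) := continuous_adj (fun _ => cvg_id).
  have chadj : continuous (fun g : 'M[R]_k => h *m \adj g).
    exact: (continuous_mulmx (fun _ => cvg_cst _) cadj).
  have cimage f : continuous f -> compact (f @` K).
    by move=> cf; apply: continuous_compact => //; apply: continuous_subspaceT.
  by apply: compactU; [apply: compactU; [apply: compactU; [exact: compact_set1|]|]|];
    [| exact: cimage | exact: cimage].
have K1n : K1 `<=` grp n.
  move=> _ [[[->|/Kn //]|[g /Kn ng <-]]|[g /Kn ng <-]]; first exact: grp1.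
    exact: grp_adj.
  by rewrite -grp_invmx //; apply: grp_mul_invmx.
have KDK_near := KDK_sub_dilate cK1 (ex_intro _ _ K1_1) K1n r_gt1.
have KDK_near_r : \forall t \near +oo, KDK K1 (D (t / r)) `<=` D t.
  have rV_gt0 : 0 < r^-1 by rewrite invr_gt0.
  by apply: filterS (near_pinfty_mulr rV_gt0 KDK_near) => t; rewrite divfK // gt_eqF.
near=> t => g Kg.
have KDK_tr : KDK K1 (D t) `<=` D (t * r) by near: t.
have KDK_t_r : KDK K1 (D (t / r)) `<=` D t by near: t.
have K1g : K1 g by left; left; right.
have adjgK : \adj g *m g = 1%:M.
  by have ng := Kn g Kg; rewrite -grp_invmx // mulVmx // grp_unit.
split => [y Dy|y Dgy|y Dgy].
- by apply: KDK_t_r; exists g, y, 1%:M; rewrite mulmx1.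
- apply: KDK_tr; exists (\adj g), (g *m y), 1%:M; split => //; first by left; right; exists g.
  by rewrite mulmx1 mulmxA adjgK mul1mx.
- apply: KDK_tr; exists (h *m \adj g), (g *m y), 1%:M; split => //; first by right; exists g.
  by rewrite mulmx1 mulmxA -(mulmxA h) adjgK mulmx1.
Unshelve. all: by end_near.
Qed.

End NicelyGrowing.

Theorem lemma3p4 (R : realType) (k : nat) (n m : {vspace 'M[R]_k})
  (D : R -> set (Mx R k)) (volM : {measure set (Mx R k) -> \bar R}) :
  nil_lie_alg n -> lie_ideal n m -> nicely_growing n D ->
  haar (grp m) volM ->
  forall h : Mx R k, grp m h ->
  forall K : set 'M[R]_k, compact K -> K `<=` grp n ->
  forall e : R, 0 < e ->
  \forall t \near +oo, forall g : Mx R k, K g ->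
    let S := [set y | D t (g *m y)] `&` grp m in
    [/\ (0 < volM S)%E, (volM S < +oo)%E &
        (tv_dist (dirac_conv h (normalized volM S)) (normalized volM S)
           < e%:E)%E].
Proof.
move=> [_ n_upper] ideal_m [ngi ngii ngiii ngiv] haar_m h mh K cK Kn e e_gt0.
have [m_null m_lmul _ _] := haar_m; have [mn _] := ideal_m.
have [Dt_meas _ _] := ngi; have nh := grpS mn mh.
pose d := degN n m; have e2_gt0 : 0 < e / 2 by rewrite divr_gt0.
have [r r_gt1 r_small] := exists_gt1_exprn_lt (d + d).+2 e2_gt0.
have r_gt0 : 0 < r by apply: lt_trans r_gt1.
have rV_gt0 : 0 < r^-1 by rewrite invr_gt0.
have [C [C_gt0 C_cvg]] := ngiii m (lie_ideal_subalg ideal_m) mn volM haar_m.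
have vol_near := cvg_growth_bounds C_gt0 r_gt1 C_cvg.
have vol_low := near_pinfty_mulr rV_gt0 vol_near.
have vol_up := near_pinfty_mulr r_gt0 vol_near.
have sandwich := lmul_sandwich n_upper ngi ngii ngiv nh cK Kn r_gt1.
near=> t; have t_gt0 : 0 < t by near: t; exact: nbhs_pinfty_gt.
have [//|vlow _] := near vol_low t; have [//|_ vup] := near vol_up t.
move=> g Kg; have /(_ _ g Kg)[//|low up h_up] := near sandwich t.
set S : set (Mx R k) := [set y | D t (g *m y)] `&` grp m.
have hu := grp_unit n_upper nh; have mG := measurable_grp m.
have mDtr : measurable (D (t * r)) by apply: (Dt_meas _ (mulr_gt0 t_gt0 r_gt0)).1.
have mS : measurable S.
  by apply: measurableI => //; exact: measurable_lmul_preimage (Dt_meas _ t_gt0).1.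
apply: (tv_dist_lmul_lt hu (fun A => m_lmul h A mh) (S' := D (t * r) `&` grp m)
  (L := C / r * (t / r) ^+ d) (q := r ^+ (d + d).+2)) => //.
- by apply: measurableI.
- by move=> y [/up Dy my].
- apply: measure_setD_setI_null => //; first exact: measurable_lmul_image.
  by move=> _ [y [/h_up Dhy _] <-].
- by rewrite mulr_gt0 ?exprn_gt0 ?divr_gt0.
- apply: le_trans vlow _; apply: le_measure; rewrite ?inE //; last by move=> y [/low].
  by apply: measurableI => //; apply: (Dt_meas _ (divr_gt0 t_gt0 r_gt0)).1.
by rewrite -growth_ratio ?gt_eqF.
Unshelve. all: by end_near.
Qed.
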